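(* Let $\mathcal{B}=\langle V,F,E\rangle$ be a self-contained finite bipartite graph and let $\mathcal{S}_F$ be the set of its minimal self-contained sets. Let $S\in\mathcal{S}_F$ and let $\mathcal{B}'$ be the subgraph of $\mathcal{B}$ induced by $V'=V\setminus\mathrm{adj}_{\mathcal{B}}(S)$ and $F'=F\setminus S$. Then (1) $\mathcal{B}'$ is self-contained, and (2) every set in $\mathcal{S}_F\setminus\{S\}$ is minimal self-contained in $\mathcal{B}'$.
   Context: $\mathcal{B}=\langle V,F,E\rangle$ is bipartite with variable vertices $V$ and constraint vertices $F$; $\mathrm{adj}_{\mathcal{B}}(X)$ is the set of vertices adjacent to some vertex of $X$. A set $F'\subseteq F$ is self-contained (in $\mathcal{B}$) if $|F'|=|\mathrm{adj}_{\mathcal{B}}(F')|$ and $|F''|\le|\mathrm{adj}_{\mathcal{B}}(F'')|$ for all $F''\subseteq F'$. $\mathcal{B}$ is self-contained if $|F|=|V|$ and $F$ is self-contained. A non-empty self-contained set is minimal self-contained if none of its non-empty strict subsets is self-contained. *)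

From mathcomp Require Import all_boot.
Set Implicit Arguments. Unset Strict Implicit. Unset Printing Implicit Defensive.

(* A finite bipartite graph B = <Vs, Fs, E>: variable vertices Vs : {set V},
   constraint vertices Fs : {set F}, and edges given by the relation E
   (restricted to Vs x Fs).  The whole graph is (setT, setT); induced
   subgraphs are obtained by shrinking Vs and Fs. *)
Section BG.
Variables (V F : finType) (E : F -> V -> bool).

Definition adj (Vs : {set V}) (X : {set F}) : {set V} :=
  [set v in Vs | [exists f in X, E f v]].

Definition self_contained_set (Vs : {set V}) (Fs : {set F}) (X : {set F}) : bool :=
  [&& X \subset Fs, #|X| == #|adj Vs X| &
      [forall Y : {set F}, (Y \subset X) ==> (#|Y| <= #|adj Vs Y|)]].

Definition self_contained_graph (Vs : {set V}) (Fs : {set F}) : bool :=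
  (#|Fs| == #|Vs|) && self_contained_set Vs Fs Fs.

Definition minimal_self_contained (Vs : {set V}) (Fs : {set F}) (X : {set F}) : bool :=
  [&& X != set0, self_contained_set Vs Fs X &
      [forall Y : {set F}, ((Y != set0) && (Y \proper X)) ==> ~~ self_contained_set Vs Fs Y]].
End BG.

From mathcomp Require Import all_boot.
From mathcomp Require Import zify.
Set Implicit Arguments. Unset Strict Implicit.

(* In a self-contained graph every set Y satisfies Hall's condition
   |Y| <= |adj Y|, so a set is self-contained exactly when it is tight,
   |X| = |adj X|.  The deficiency |adj Y| - |Y| is submodular, hence tight
   sets are closed under intersection; two distinct minimal self-contained
   sets T, S are therefore disjoint, and the same submodularity then forces
   adj T and adj S to be disjoint.  Deleting S and adj S thus leaves every
   subset of T with the same neighbourhood, while for an arbitrary Y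
   disjoint from S, Hall's condition for Y :|: S gives
   |Y| <= |adj Y :\: adj S|, which is Hall's condition in the smaller
   graph. *)

Section Adjacency.
Variables (V F : finType) (E : F -> V -> bool).
Local Notation A := (adj E [set: V]).

Lemma adj_restrict (Vs : {set V}) (Y : {set F}) : adj E Vs Y = Vs :&: A Y.
Proof. by apply/setP => v; rewrite !inE. Qed.

Lemma adj_restrict_id (Vs : {set V}) (Y : {set F}) :
  A Y \subset Vs -> adj E Vs Y = A Y.
Proof. by move=> sYV; rewrite adj_restrict; apply/setIidPr. Qed.

Lemma adjS (Vs : {set V}) (Y Z : {set F}) :
  Y \subset Z -> adj E Vs Y \subset adj E Vs Z.
Proof.
move=> sYZ; apply/subsetP => v; rewrite !inE => /andP [-> /existsP [f /andP [Yf Efv]]].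
by apply/existsP; exists f; rewrite Efv (subsetP sYZ).
Qed.

Lemma adjU (Vs : {set V}) (Y Z : {set F}) :
  adj E Vs (Y :|: Z) = adj E Vs Y :|: adj E Vs Z.
Proof.
apply/setP => v; rewrite !inE -andb_orr; congr andb; apply/existsP/orP.
- by case=> f /andP [/setUP [] Hf Efv]; [left|right]; apply/existsP; exists f; rewrite Hf Efv.
- by case=> /existsP [f /andP [Hf Efv]]; exists f; rewrite inE Hf Efv ?orbT.
Qed.

Lemma adjI_subset (Vs : {set V}) (Y Z : {set F}) :
  adj E Vs (Y :&: Z) \subset adj E Vs Y :&: adj E Vs Z.
Proof. by rewrite subsetI !adjS ?subsetIl ?subsetIr. Qed.

Lemma minimal_self_contained_sub (Vs : {set V}) (Fs X Y : {set F}) :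
  minimal_self_contained E Vs Fs X -> Y != set0 ->
  self_contained_set E Vs Fs Y -> Y \subset X -> Y = X.
Proof.
case/and3P=> _ _ /forallP minX Y0 scY /eqVproper [] // pYX.
by have := minX Y; rewrite Y0 pYX scY.
Qed.

Lemma self_contained_set_restrict (Vs : {set V}) (Fs X : {set F}) :
  X \subset Fs -> A X \subset Vs ->
  self_contained_set E Vs Fs X = self_contained_set E [set: V] [set: F] X.
Proof.
move=> sXF sAXV; rewrite /self_contained_set sXF subsetT adj_restrict_id //=.
apply: andb_id2l => _; apply: eq_forallb => Y; case sYX: (Y \subset X) => //=.
by rewrite adj_restrict_id // (subset_trans (adjS _ sYX)).
Qed.

Lemma minimal_self_contained_restrict (Vs : {set V}) (Fs X : {set F}) :
  X \subset Fs -> A X \subset Vs ->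
  minimal_self_contained E Vs Fs X = minimal_self_contained E [set: V] [set: F] X.
Proof.
move=> sXF sAXV; rewrite /minimal_self_contained self_contained_set_restrict //.
do 2 apply: andb_id2l => _; apply: eq_forallb => Y.
case pYX: (Y \proper X); rewrite ?andbF //= self_contained_set_restrict //.
- exact: subset_trans (proper_sub pYX) sXF.
- exact: subset_trans (adjS _ (proper_sub pYX)) sAXV.
Qed.

Lemma self_contained_setT_hall :
  self_contained_set E [set: V] [set: F] [set: F] ->
  forall Y : {set F}, #|Y| <= #|A Y|.
Proof. by case/and3P=> _ _ /forallP hall Y; have := hall Y; rewrite subsetT. Qed.

Section Hall.
Hypothesis hall : forall Y : {set F}, #|Y| <= #|A Y|.

Lemma self_contained_setT_tight (X : {set F}) :
  self_contained_set E [set: V] [set: F] X = (#|X| == #|A X|).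
Proof.
rewrite /self_contained_set subsetT /=.
have -> : [forall Y : {set F}, (Y \subset X) ==> (#|Y| <= #|A Y|)] = true.
  by apply/forallP => Y; apply/implyP.
by rewrite andbT.
Qed.

Lemma card_adjI_le (T S : {set F}) :
  #|T| = #|A T| -> #|S| = #|A S| -> #|A T :&: A S| <= #|T :&: S|.
Proof.
move=> tightT tightS.
have := cardsUI (A T) (A S); have := cardsUI T S.
have := hall (T :|: S); rewrite adjU.
lia.
Qed.

Lemma self_contained_setI (T S : {set F}) :
  self_contained_set E [set: V] [set: F] T -> self_contained_set E [set: V] [set: F] S ->
  self_contained_set E [set: V] [set: F] (T :&: S).
Proof.
rewrite !self_contained_setT_tight => /eqP tightT /eqP tightS.
rewrite eqn_leq hall (leq_trans (subset_leq_card (adjI_subset _ _ _))) //.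
exact: card_adjI_le.
Qed.

Lemma minimal_self_contained_disjoint (T S : {set F}) :
  minimal_self_contained E [set: V] [set: F] T ->
  minimal_self_contained E [set: V] [set: F] S -> T != S ->
  [disjoint T & S].
Proof.
move=> minT minS; apply: contraNT; rewrite -setI_eq0 => TS0.
have scS : self_contained_set E [set: V] [set: F] S by case/and3P: minS.
have scT : self_contained_set E [set: V] [set: F] T by case/and3P: minT.
have TSS := minimal_self_contained_sub minS TS0 (self_contained_setI scT scS) (subsetIr T S).
have S0 : S != set0 by rewrite -TSS.
by rewrite (minimal_self_contained_sub minT S0 scS) // -TSS subsetIl.
Qed.

Lemma adj_disjoint (T S : {set F}) :
  self_contained_set E [set: V] [set: F] T -> self_contained_set E [set: V] [set: F] S ->
  [disjoint T & S] -> [disjoint A T & A S].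
Proof.
rewrite !self_contained_setT_tight -!setI_eq0 -!cards_eq0 -!leqn0 => /eqP tT /eqP tS.
exact: leq_trans (card_adjI_le tT tS).
Qed.

Lemma hall_contract (S Y : {set F}) :
  #|S| = #|A S| -> Y \subset ~: S -> #|Y| <= #|adj E (~: A S) Y|.
Proof.
rewrite -disjoints_subset -setI_eq0 => tightS /eqP YS0.
rewrite adj_restrict setIC -setDE.
have := hall (Y :|: S); rewrite adjU.
have := cardsUI Y S; have := cardsUI (A Y) (A S); have := cardsID (A S) (A Y).
rewrite YS0 cards0; lia.
Qed.

Lemma self_contained_graph_contract (S : {set F}) :
  #|[set: F]| = #|[set: V]| -> self_contained_set E [set: V] [set: F] S ->
  self_contained_graph E (~: A S) (~: S).
Proof.
rewrite self_contained_setT_tight => cardFV /eqP tightS.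
have cardC : #|~: S| = #|~: A S|.
  by have := cardsC S; have := cardsC (A S); rewrite !cardsT in cardFV; lia.
have hallC := hall_contract tightS.
have adjC_le : #|adj E (~: A S) (~: S)| <= #|~: A S|.
  by rewrite adj_restrict subset_leq_card ?subsetIl.
rewrite /self_contained_graph /self_contained_set cardC eqxx subxx /=.
rewrite eqn_leq adjC_le -cardC hallC //=.
by apply/forallP => Y; apply/implyP; apply: hallC.
Qed.

Lemma minimal_self_contained_contract (S T : {set F}) :
  minimal_self_contained E [set: V] [set: F] S ->
  minimal_self_contained E [set: V] [set: F] T -> T != S ->
  minimal_self_contained E (~: A S) (~: S) T.
Proof.
move=> minS minT TS.
have disjTS := minimal_self_contained_disjoint minT minS TS.
have scS : self_contained_set E [set: V] [set: F] S by case/and3P: minS.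
have scT : self_contained_set E [set: V] [set: F] T by case/and3P: minT.
rewrite minimal_self_contained_restrict // -disjoints_subset //.
exact: adj_disjoint scT scS disjTS.
Qed.

End Hall.
End Adjacency.

Theorem lemma33 (V F : finType) (E : F -> V -> bool) (S : {set F}) :
  self_contained_graph E [set: V] [set: F] ->
  minimal_self_contained E [set: V] [set: F] S ->
  self_contained_graph E (~: adj E [set: V] S) (~: S) /\
  (forall T : {set F}, minimal_self_contained E [set: V] [set: F] T -> T != S ->
     minimal_self_contained E (~: adj E [set: V] S) (~: S) T).
Proof.
move=> /andP [/eqP cardFV scF] minS.
have hall := self_contained_setT_hall scF.
split; last by move=> T; apply: minimal_self_contained_contract.
by apply: self_contained_graph_contract => //; case/and3P: minS.
Qed.
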